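(* Let $d,r\ge2$. The map $\mathbb M_{d,r}\to\mathcal M_{d,r}$ sending $(\mathbf u,\mathbf w)$ to the element whose $i$-th chart representative is $\varphi_i(\mathbf u,\mathbf w)$ is well defined and bijective (each $\varphi_i$ is a bijection $\mathbb M_{d,r}\to M^{(i)}_{d,r}$ and $\mu_{i,i+1}\circ\varphi_i=\varphi_{i+1}$). Under this identification, $(\mathbf a,\mathbf b)\mapsto f_{\mathbf a,\mathbf b}$ is a bijection from $T_{d,r}$ onto $\mathrm{Sp}(\mathcal M_{d,r})$, restricting for each $i\in[r]$ to a bijection from $T_{d,r}(i)$ onto $\mathrm{Sp}(\mathcal M_{d,r},i)$. In particular $\mathcal M_{d,r}$ is full.
   Context: A polyptych lattice over $\mathbb Z$: lattices $\{M_\alpha\}_{\alpha\in I}$ of rank $n$ with piecewise linear maps (continuous, linear on the cones of a complete rational fan) $\mu_{\alpha,\beta}$, $\mu_{\alpha,\alpha}=\mathrm{id}$, $\mu_{\alpha,\beta}=\mu_{\beta,\alpha}^{-1}$, $\mu_{\beta,\gamma}\mu_{\alpha,\beta}=\mu_{\alpha,\gamma}$; elements are classes of $\bigsqcup M_\alpha$ under $m\sim\mu_{\alpha,\beta}(m)$, with chart maps $\pi_\alpha$; $m+_\alpha m'=\pi_\alpha^{-1}(\pi_\alpha m+\pi_\alpha m')$; $\lambda m=\pi_\alpha^{-1}(\lambda\pi_\alpha m)$. A point is $p:\mathcal M\to\mathbb Z$ with $p(m)+p(m')=\min_\alpha p(m+_\alpha m')$ and $p(\lambda m)=\lambda p(m)$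 ($\lambda\in\mathbb Z_{\ge0}$); $\mathrm{Sp}(\mathcal M)$ is the set of points, $\mathrm{Sp}(\mathcal M,\alpha)$ those with $p\circ\pi_\alpha^{-1}$ linear; $\mathcal M$ is full if $\mathrm{Sp}(\mathcal M)=\bigcup_\alpha\mathrm{Sp}(\mathcal M,\alpha)$. The polyptych lattice $\mathcal M_{d,r}$ (rank $d+r-1$): coordinates $(\mathbf u,\mathbf w)\in\mathbb Z^d\times\mathbb Z^r$; charts $M^{(i)}_{d,r}=\{(\mathbf u,\mathbf w):w_i=0\}$ for $i\in[r]$; mutations $\mu_{i,i+1}(\mathbf u,\mathbf w)=(\mathbf u,w_1,\dots,w_{i-1},\min\{u_1,\dots,u_d\}-\sum_kw_k,0,w_{i+2},\dots,w_r)$ for $i\in[r-1]$, with all other $\mu_{i,j}$ obtained by composition and inversion. Let $\mathbf 1=(1,\dots,1)\in\mathbb Z^d$, $\langle\cdot,\cdot\rangle$ the standard pairing, $\varepsilon_i$ standard basis vectors. $\mathbb M_{d,r}=\{(\mathbf u,\mathbf w)\in\mathbb Z^d\times\mathbb Z^r:\min_ju_j=0\}$. $\varphi_i:\mathbb M_{d,r}\to M^{(i)}_{d,r}$, $\varphi_i(\mathbf u,\mathbf w)=\pi_i(\mathbf u+\langle\mathbf 1,\mathbf w\rangle\mathbf 1,\mathbf w)$ where $\pi_i$ sets the $i$-th $\mathbf w$-coordinate to $0$ (its inverse is $(\mathbf u,\mathbf w)\mapsto(\mathbf u-\min(\mathbf u)\mathbf 1,\mathbf w+(\min(\mathbf u)-\langle\mathbf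 1,\mathbf w\rangle)\varepsilon_i)$). $T_{d,r}=\{(\mathbf a,\mathbf b)\in\mathbb Z^d\times\mathbb Z^r:a_1+\cdots+a_d=\min\{b_1,\dots,b_r\}\}$, $T_{d,r}(i)=\{(\mathbf a,\mathbf b)\in T_{d,r}:a_1+\cdots+a_d=b_i\}$. For $(\mathbf a,\mathbf b)\in T_{d,r}$, $f_{\mathbf a,\mathbf b}:\mathbb M_{d,r}\to\mathbb Z$, $f_{\mathbf a,\mathbf b}(\mathbf u,\mathbf w)=\langle\mathbf a,\mathbf u\rangle+\langle\mathbf b,\mathbf w\rangle$. *)

From HB Require Import structures.
From mathcomp Require Import all_boot all_order all_algebra.
From Stdlib Require Import Relations.Relation_Operators ClassicalEpsilon.
Set Implicit Arguments. Unset Strict Implicit. Unset Printing Implicit Defensive.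
Import Order.TTheory GRing.Theory Num.Theory.
Local Open Scope ring_scope.

(* Minimum of finitely many integers (0 for an empty family; only used
   for nonempty families, since d, r >= 2). *)
Definition minf (n : nat) (f : 'I_n -> int) : int :=
  match [seq f j | j <- enum 'I_n] with
  | [::] => 0
  | x :: s => foldr Num.min x s
  end.

(* Ambient coordinates (u, w) in Z^d x Z^r; index [r] = {1..r} is 'I_r. *)
Definition V (d r : nat) := ({ffun 'I_d -> int} * {ffun 'I_r -> int})%type.

Definition vzero d r : V d r := ([ffun => 0], [ffun => 0]).
Definition vadd d r (x y : V d r) : V d r :=
  ([ffun j => x.1 j + y.1 j], [ffun k => x.2 k + y.2 k]).
Definition vscale d r (l : nat) (x : V d r) : V d r :=
  ([ffun j => l%:Z * x.1 j], [ffun k => l%:Z * x.2 k]).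

Definition in_chart d r (i : 'I_r) (x : V d r) : bool := x.2 i == 0.
Definition chartproj d r (i : 'I_r) (x : V d r) : V d r :=
  (x.1, [ffun k => if k == i then 0 else x.2 k]).

(* mutation mu_{i,i+1} (0-based i, defined when i.+1 < r) *)
Definition mu_adj d r (i : nat) (x : V d r) : V d r :=
  (x.1, [ffun k : 'I_r =>
          if (k == i :> nat) then minf x.1 - \sum_l x.2 l
          else if (k == i.+1 :> nat) then 0 else x.2 k]).

(* generating relation of ~ on the disjoint union of the charts:
   m ~ mu_{i,i+1}(m) for m in M^(i); the equivalence it generates is the one
   generated by all mu_{alpha,beta} (obtained by composition/inversion). *)
Definition step d r (z z' : 'I_r * V d r) : Prop :=
  (z'.1 = z.1.+1 :> nat) /\ in_chart z.1 z.2 /\ z'.2 = mu_adj z.1 z.2.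

Definition cls d r (z : 'I_r * V d r) : 'I_r * V d r -> Prop :=
  fun z' => clos_refl_sym_trans _ (@step d r) z z'.

Definition is_class d r (C : 'I_r * V d r -> Prop) : Prop :=
  exists i x, in_chart i x /\ C = cls (i, x).

Definition Melt (d r : nat) := {C : 'I_r * V d r -> Prop | is_class C}.

Lemma cls_is_class d r (i : 'I_r) (x : V d r) :
  is_class (cls (i, chartproj i x)).
Proof.
exists i, (chartproj i x); split => //.
by rewrite /in_chart /chartproj /= ffunE eqxx.
Qed.

Definition liftM d r (i : 'I_r) (x : V d r) : Melt d r :=
  exist _ (cls (i, chartproj i x)) (cls_is_class i x).

Definition piM d r (i : 'I_r) (m : Melt d r) : V d r :=
  epsilon (inhabits (vzero d r))
    (fun x => in_chart i x /\ proj1_sig m (i, x)).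

Definition addM d r (i : 'I_r) (m m' : Melt d r) : Melt d r :=
  liftM i (vadd (piM i m) (piM i m')).
Definition scaleM d r (i : 'I_r) (l : nat) (m : Melt d r) : Melt d r :=
  liftM i (vscale l (piM i m)).

Definition is_point d r (p : Melt d r -> int) : Prop :=
  (forall m m' : Melt d r, p m + p m' = minf (fun i => p (addM i m m'))) /\
  (forall (i : 'I_r) (l : nat) (m : Melt d r), p (scaleM i l m) = l%:Z * p m).

Definition is_point_at d r (i : 'I_r) (p : Melt d r -> int) : Prop :=
  is_point p /\
  forall x y : V d r, in_chart i x -> in_chart i y ->
    p (liftM i (vadd x y)) = p (liftM i x) + p (liftM i y).

Definition inMM d r (x : V d r) : bool := minf x.1 == 0.

Definition phi d r (i : 'I_r) (x : V d r) : V d r :=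
  ([ffun j => x.1 j + \sum_k x.2 k], [ffun k => if k == i then 0 else x.2 k]).

Definition iotaM d r (i : 'I_r) (y : V d r) : Melt d r := liftM i (phi i y).

Definition inT d r (ab : V d r) : bool := \sum_j ab.1 j == minf ab.2.
Definition inTi d r (i : 'I_r) (ab : V d r) : bool :=
  inT ab && (\sum_j ab.1 j == ab.2 i).
Definition fab d r (ab : V d r) (x : V d r) : int :=
  \sum_j ab.1 j * x.1 j + \sum_k ab.2 k * x.2 k.

(* The representative in chart i of an element of M_{d,r} is phi_i y for a
   unique y in MM_{d,r}: the inverse psi_i of phi_i is invariant under the
   mutations, so the class of (i, x) is exactly the fibre of psi over psi_i x.
   Pulled back to MM_{d,r}, the sum of phi_i y and phi_i y' in chart i is
   y +_i y' := y + y' + c (-1, e_i) with c = min (u + u') >= 0.  Hence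
     min_i f_{a,b} (y +_i y') = f_{a,b} y + f_{a,b} y' + c (min b - sum a),
     f_{a,b} (y +_i y') = f_{a,b} y + f_{a,b} y' + c (b_i - sum a),
   and since c = 1 for y = (e_1, 0), y' = (1 - e_1, 0), f_{a,b} is a point iff
   sum a = min b, and is linear in chart i iff moreover b_i = sum a.
   Conversely a point is additive on pairs with c = 0, which is enough to
   show that it is f_{a,b} with a, b its values on unit vectors. *)

From mathcomp Require Import all_boot all_order all_algebra.
From mathcomp Require Import ring zify.
From Stdlib Require Import ClassicalEpsilon ProofIrrelevance FunctionalExtensionality PropExtensionality Relations.Relation_Operators.
Set Implicit Arguments. Unset Strict Implicit. Unset Printing Implicit Defensive.
Import Order.TTheory GRing.Theory Num.Theory.
Local Open Scope ring_scope.

Lemma foldr_min_le (x : int) s y : y \in x :: s -> foldr Num.min x s <= y.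
Proof.
elim: s y => [|z s IH] y /=; first by rewrite inE => /eqP ->.
rewrite !inE => /orP[/eqP->|/orP[/eqP->|hy]].
- by rewrite ge_min IH ?orbT // inE eqxx.
- by rewrite ge_min lexx.
- by rewrite ge_min IH ?orbT // inE hy orbT.
Qed.

Lemma foldr_min_mem (x : int) s : foldr Num.min x s \in x :: s.
Proof.
elim: s => [|z s IH] /=; first by rewrite inE.
rewrite !inE; case: (leP z (foldr Num.min x s)) => _; first by rewrite eqxx orbT.
by move: IH; rewrite inE => /orP[->|->]; rewrite ?orbT.
Qed.

Lemma minf_le n (f : 'I_n -> int) j : minf f <= f j.
Proof.
rewrite /minf; have : f j \in [seq f j | j <- enum 'I_n] by rewrite map_f ?mem_enum.
by case: [seq _ | _ <- _] => [//|x s]; apply: foldr_min_le.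
Qed.

Lemma minf_attained n (f : 'I_n -> int) : (0 < n)%N -> exists j, minf f = f j.
Proof.
move=> n_gt0; rewrite /minf.
have : Ordinal n_gt0 \in enum 'I_n by rewrite mem_enum.
have := @foldr_min_mem.
case E: [seq f j | j <- enum 'I_n] => [|x s]; first by move: E; case: (enum 'I_n).
by move=> /(_ x s); rewrite -E => /mapP[j _ ->]; exists j.
Qed.

Lemma minf_eq n (f : 'I_n -> int) m j0 :
  f j0 = m -> (forall j, m <= f j) -> minf f = m.
Proof.
move=> fj0 m_le; apply/le_anti; rewrite -{1}fj0 minf_le /=.
by have [k ->] := minf_attained f (leq_ltn_trans (leq0n j0) (ltn_ord j0)).
Qed.

Lemma eq_minf n (f g : 'I_n -> int) : f =1 g -> minf f = minf g.
Proof. by move=> e; rewrite /minf (eq_map e). Qed.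

Lemma minfD n (f : 'I_n -> int) c :
  (0 < n)%N -> minf (fun j => f j + c) = minf f + c.
Proof.
move=> n_gt0; have [k fk] := minf_attained f n_gt0.
by apply: (@minf_eq _ _ _ k) => [|j]; [rewrite fk | rewrite lerD2r minf_le].
Qed.

Lemma minfMl n (f : 'I_n -> int) c :
  (0 < n)%N -> 0 <= c -> minf (fun j => c * f j) = c * minf f.
Proof.
move=> n_gt0 c_ge0; have [k fk] := minf_attained f n_gt0.
by apply: (@minf_eq _ _ _ k) => [|j]; [rewrite fk | rewrite ler_wpM2l // minf_le].
Qed.

Lemma minf_const n c (j0 : 'I_n) : minf (fun _ : 'I_n => c) = c.
Proof. exact: (@minf_eq _ _ _ j0). Qed.

Lemma sum_ffun_zero_at r (w : {ffun 'I_r -> int}) (i : 'I_r) :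
  \sum_k [ffun k => if k == i then 0 else w k] k = \sum_k w k - w i.
Proof.
rewrite (bigD1 i) //= ffunE eqxx add0r [in RHS](bigD1 i) //= addrAC subrr add0r.
by apply: eq_bigr => k /negbTE ki; rewrite ffunE ki.
Qed.

Definition ffun0 n : {ffun 'I_n -> int} := [ffun => 0].

Definition sing n (k : 'I_n) (s : int) : {ffun 'I_n -> int} :=
  [ffun j => if j == k then s else 0].

Lemma sum_mul_sing n (c : 'I_n -> int) (k : 'I_n) s :
  \sum_j c j * sing k s j = c k * s.
Proof.
rewrite (bigD1 k) //= ffunE eqxx big1 ?addr0 // => j /negbTE jk.
by rewrite ffunE jk mulr0.
Qed.

Lemma ffun_update_ind (T : Type) (x0 : T) n (P : {ffun 'I_n -> T} -> Prop) :
  P [ffun => x0] ->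
  (forall (w : {ffun 'I_n -> T}) k, w k = x0 -> P w ->
     forall s, P [ffun j => if j == k then s else w j]) ->
  forall w, P w.
Proof.
move=> P0 PS.
suff H m (w : {ffun 'I_n -> T}) : (forall j : 'I_n, (m <= j)%N -> w j = x0) -> P w.
  by move=> w; apply: (H n) => j; rewrite leqNgt ltn_ord.
elim: m w => [|m IH] w w_hi.
  by have -> : w = [ffun => x0] by apply/ffunP => j; rewrite ffunE w_hi.
have [m_lt|m_ge] := ltnP m n; last first.
  by apply: IH => j mj; apply: w_hi; have := ltn_ord j; lia.
pose k := Ordinal m_lt.
suff -> : w = [ffun j => if j == k then w k else [ffun j => if j == k then x0 else w j] j].
  apply: PS; first by rewrite ffunE eqxx.
  apply: IH => j mj; rewrite ffunE; case: eqP => // /eqP jk; apply: w_hi.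
  have : (j : nat) != m by apply: contra jk => /eqP e; apply/eqP/val_inj.
  lia.
by apply/ffunP => j; rewrite !ffunE; case: eqP => [->|].
Qed.

Lemma ffun_linear_on n (A : pred {ffun 'I_n -> int}) (G : {ffun 'I_n -> int} -> int) :
  G (ffun0 n) = 0 ->
  (forall (w : {ffun 'I_n -> int}) k s, w k = 0 -> [ffun j => if j == k then s else w j] \in A ->
     w \in A /\ G [ffun j => if j == k then s else w j] = G w + s * G (sing k 1)) ->
  {in A, forall w, G w = \sum_k G (sing k 1) * w k}.
Proof.
move=> G0 G_update w; elim/(@ffun_update_ind int 0): w => [_|w k wk IH s].
  by rewrite G0 big1 // => k _; rewrite ffunE mulr0.
move=> /(G_update _ _ _ wk) [/IH -> ->]; rewrite mulrC.
rewrite (bigD1 k) //= [in RHS](bigD1 k) //= ffunE eqxx wk mulr0 add0r addrC.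
by congr (_ + _); apply: eq_bigr => j /negbTE jk; rewrite ffunE jk.
Qed.

Section Lattice.

Variables d r : nat.
Implicit Types (i : 'I_r) (x y : V d r).

Definition phi_inv i x : V d r :=
  ([ffun j => x.1 j - minf x.1],
   [ffun k => if k == i then minf x.1 - \sum_l x.2 l else x.2 k]).

Definition chart_fibre y : 'I_r * V d r -> Prop :=
  fun z => in_chart z.1 z.2 /\ phi_inv z.1 z.2 = y.

Hypothesis d_gt0 : (0 < d)%N.

Lemma inMM_ge0 y : inMM y -> forall j, 0 <= y.1 j.
Proof. by move=> /eqP y_min j; rewrite -y_min minf_le. Qed.

Lemma in_chart_phi i y : in_chart i (phi i y).
Proof. by rewrite /in_chart /phi /= ffunE eqxx. Qed.

Lemma minf_phi i y : inMM y -> minf (phi i y).1 = \sum_k y.2 k.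
Proof.
move=> /eqP y_min; rewrite (@eq_minf _ _ (fun j => y.1 j + \sum_k y.2 k)).
  by rewrite minfD // y_min add0r.
by move=> j; rewrite ffunE.
Qed.

Lemma phiK i y : inMM y -> phi_inv i (phi i y) = y.
Proof.
move=> y_MM; rewrite /phi_inv minf_phi //; case: y y_MM => u w _ /=.
congr (_, _); apply/ffunP => j; rewrite !ffunE ?addrK //.
by rewrite sum_ffun_zero_at; case: eqP => [->|//]; ring.
Qed.

Lemma inMM_phi_inv i x : inMM (phi_inv i x).
Proof.
rewrite /inMM (@eq_minf _ _ (fun j => x.1 j + - minf x.1)).
  by rewrite minfD // subrr.
by move=> j; rewrite ffunE.
Qed.

Lemma sum_phi_inv i x : in_chart i x -> \sum_k (phi_inv i x).2 k = minf x.1.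
Proof.
move=> /eqP xi0; rewrite (bigD1 i) //= ffunE eqxx.
rewrite (bigD1 i (P := xpredT)) //= xi0 add0r.
rewrite [X in _ + X](eq_bigr (fun k => x.2 k)) ?subrK // => k /negbTE ki.
by rewrite ffunE ki.
Qed.

Lemma phi_invK i x : in_chart i x -> phi i (phi_inv i x) = x.
Proof.
move=> x_chart; rewrite /phi sum_phi_inv //; case: x x_chart => u w /eqP /= wi0.
by congr (_, _); apply/ffunP => j; rewrite !ffunE ?subrK //; case: eqP => [->|].
Qed.

Lemma mu_adj_phi i (j : 'I_r) y : (j = i.+1 :> nat) -> inMM y -> mu_adj i (phi i y) = phi j y.
Proof.
move=> ji y_MM; rewrite /mu_adj minf_phi //.
congr (_, _); apply/ffunP => k; rewrite !ffunE sum_ffun_zero_at.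
have [/val_inj ->|ki] := eqVneq (k : nat) i.
  have -> : (i == j) = false by apply/negbTE/eqP => e; move: ji; rewrite e; lia.
  by ring.
rewrite (_ : (k == i) = false); last by apply/negbTE; apply: contra ki => /eqP ->.
have [kSi|kSi] := eqVneq (k : nat) i.+1.
  by rewrite (_ : k = j) ?eqxx //; apply: val_inj; rewrite /= kSi ji.
rewrite (_ : (k == j) = false) //.
by apply/negbTE; apply: contra kSi => /eqP ->; rewrite ji.
Qed.

Lemma step_phi_inv z z' :
  step z z' -> in_chart z'.1 z'.2 /\ phi_inv z.1 z.2 = phi_inv z'.1 z'.2.
Proof.
case: z z' => i x [j x'] [/= ji [x_chart ->]].
have := mu_adj_phi ji (inMM_phi_inv i x); rewrite phi_invK // => ->.
by rewrite in_chart_phi phiK ?inMM_phi_inv.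
Qed.

Lemma cls_sub_chart_fibre i x z :
  in_chart i x -> cls (i, x) z -> chart_fibre (phi_inv i x) z.
Proof.
suff H z1 z2 : clos_refl_sym_trans _ (@step d r) z1 z2 -> z1 = z2 \/
    [/\ in_chart z1.1 z1.2, in_chart z2.1 z2.2 & phi_inv z1.1 z1.2 = phi_inv z2.1 z2.2].
  by move=> x_chart /H [<- //|[_ z_chart ->]].
elim=> {z1 z2} [z1 z2 z12|z1|z1 z2 _ [->|[? ? ->]]|z1 z2 z3 _ [<-|[? ? ->]] _ [<-|[? ? ->]]].
- by right; have [? ?] := step_phi_inv z12; case: z12 => _ [].
all: by [left | right].
Qed.

Lemma cls_phi i (j : 'I_r) y : inMM y -> cls (i, phi i y) (j, phi j y).
Proof.
move=> y_MM; have r_gt0 : (0 < r)%N by apply: leq_ltn_trans (ltn_ord i).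
pose o0 := Ordinal r_gt0.
suff from0 k : cls (o0, phi o0 y) (k, phi k y).
  exact: rst_trans (rst_sym _ _ _ _ (from0 i)) (from0 j).
case: k => n; elim: n => [|n IH] n_lt.
  by rewrite (_ : Ordinal n_lt = o0); [apply: rst_refl | apply: val_inj].
have n_lt' : (n < r)%N by apply: ltnW.
apply: rst_trans (IH n_lt') (rst_step _ _ _ _ _); split => //; split.
  exact: in_chart_phi.
by rewrite (@mu_adj_phi (Ordinal n_lt') (Ordinal n_lt)).
Qed.

Lemma cls_chart_fibre i x : in_chart i x -> cls (i, x) = chart_fibre (phi_inv i x).
Proof.
move=> x_chart; apply: functional_extensionality => z.
apply: propositional_extensionality; split; first exact: cls_sub_chart_fibre.
case: z => j x' [/= x'_chart e].
rewrite -(phi_invK x'_chart) -[x in cls (i, x)](phi_invK x_chart) e.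
by apply: cls_phi; apply: inMM_phi_inv.
Qed.

Lemma Melt_eq (m m' : Melt d r) : proj1_sig m = proj1_sig m' -> m = m'.
Proof.
case: m m' => C C_cls [C' C'_cls] /= e; subst C'.
by rewrite (proof_irrelevance _ C_cls C'_cls).
Qed.

Lemma chartprojK i x : in_chart i x -> chartproj i x = x.
Proof.
case: x => u w /eqP /= wi0; congr (_, _); apply/ffunP => k.
by rewrite ffunE; case: eqP => // ->.
Qed.

Lemma liftM_val i x : in_chart i x -> proj1_sig (liftM i x) = chart_fibre (phi_inv i x).
Proof. by move=> x_chart; rewrite /= chartprojK // cls_chart_fibre. Qed.

Lemma iotaM_val i y : inMM y -> proj1_sig (iotaM i y) = chart_fibre y.
Proof. by move=> y_MM; rewrite /iotaM liftM_val ?in_chart_phi // phiK. Qed.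

Lemma liftM_iotaM i (j : 'I_r) x : in_chart i x -> liftM i x = iotaM j (phi_inv i x).
Proof.
by move=> x_chart; apply: Melt_eq; rewrite liftM_val // iotaM_val // inMM_phi_inv.
Qed.

Lemma iotaM_indep i (j : 'I_r) y : inMM y -> iotaM i y = iotaM j y.
Proof. by move=> y_MM; apply: Melt_eq; rewrite !iotaM_val. Qed.

Lemma piM_iotaM i (j : 'I_r) y : inMM y -> piM j (iotaM i y) = phi j y.
Proof.
move=> y_MM; rewrite /piM iotaM_val //; set P := fun x => _.
have P_phi : P (phi j y) by rewrite /P /chart_fibre /= in_chart_phi phiK.
have [x_chart [_ <-]] := epsilon_spec (inhabits (vzero d r)) P (ex_intro _ _ P_phi).
by rewrite phi_invK.
Qed.

Lemma iotaM_inj i y y' : inMM y -> inMM y' -> iotaM i y = iotaM i y' -> y = y'.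
Proof.
move=> y_MM y'_MM /(congr1 (@proj1_sig _ _)); rewrite !iotaM_val // => e.
have : chart_fibre y (i, phi i y) by rewrite /chart_fibre /= in_chart_phi phiK.
by rewrite e => -[_ /=]; rewrite phiK.
Qed.

Lemma iotaM_surj i (m : Melt d r) : exists2 y, inMM y & iotaM i y = m.
Proof.
case: m => C [j [x [x_chart e]]]; exists (phi_inv j x); first exact: inMM_phi_inv.
by apply: Melt_eq; rewrite iotaM_val ?inMM_phi_inv //= e cls_chart_fibre.
Qed.

Definition chart_corr (c : int) i : V d r :=
  ([ffun => - c], [ffun k => if k == i then c else 0]).

Definition min_uD y y' : int := minf (fun j => y.1 j + y'.1 j).

Lemma min_uD_ge0 y y' : inMM y -> inMM y' -> 0 <= min_uD y y'.
Proof.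
move=> y_MM y'_MM; rewrite /min_uD.
have [j ->] := minf_attained (fun j => y.1 j + y'.1 j) d_gt0.
by rewrite addr_ge0 // inMM_ge0.
Qed.

Lemma vadd_chart_corr0 i x : vadd x (chart_corr 0 i) = x.
Proof.
case: x => u w; congr (_, _); apply/ffunP => j; rewrite !ffunE ?oppr0 ?addr0 //.
by case: eqP; rewrite addr0.
Qed.

Lemma in_chart_vadd i x x' : in_chart i x -> in_chart i x' -> in_chart i (vadd x x').
Proof. by rewrite /in_chart ffunE => /eqP -> /eqP ->. Qed.

Lemma in_chart_vscale i l x : in_chart i x -> in_chart i (vscale l x).
Proof. by rewrite /in_chart ffunE => /eqP ->; rewrite mulr0. Qed.

Lemma phi_inv_add i y y' : inMM y -> inMM y' ->
  phi_inv i (vadd (phi i y) (phi i y')) = vadd (vadd y y') (chart_corr (min_uD y y') i).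
Proof.
move=> y_MM y'_MM.
have min_sum : minf (vadd (phi i y) (phi i y')).1 =
    min_uD y y' + (\sum_k y.2 k + \sum_k y'.2 k).
  by rewrite -minfD //; apply: eq_minf => j; rewrite !ffunE; ring.
have sum_sum : \sum_l (vadd (phi i y) (phi i y')).2 l =
    (\sum_k y.2 k - y.2 i) + (\sum_k y'.2 k - y'.2 i).
  rewrite -!sum_ffun_zero_at -big_split /=; apply: eq_bigr => k _.
  by rewrite !ffunE; case: (k == i); rewrite ?addr0.
rewrite /phi_inv min_sum sum_sum; congr (_, _); apply/ffunP => j; rewrite !ffunE /=.
  by ring.
by case: eqP => [->|_]; [ring | rewrite addr0].
Qed.

Lemma inMM_vadd_chart_corr i y y' : inMM y -> inMM y' ->
  inMM (vadd (vadd y y') (chart_corr (min_uD y y') i)).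
Proof. by move=> y_MM y'_MM; rewrite -(phi_inv_add i) //; apply: inMM_phi_inv. Qed.

Lemma phi_inv_scale i l y : inMM y -> phi_inv i (vscale l (phi i y)) = vscale l y.
Proof.
move=> y_MM.
have min_scale : minf (vscale l (phi i y)).1 = l%:Z * \sum_k y.2 k.
  by rewrite -(minf_phi i y_MM) -minfMl //; apply: eq_minf => j; rewrite ffunE.
have sum_scale : \sum_k (vscale l (phi i y)).2 k = l%:Z * (\sum_k y.2 k - y.2 i).
  rewrite -sum_ffun_zero_at mulr_sumr; apply: eq_bigr => k _.
  by rewrite !ffunE; case: (k == i); rewrite ?mulr0.
rewrite /phi_inv min_scale sum_scale; congr (_, _); apply/ffunP => j; rewrite !ffunE /=.
  by ring.
by case: eqP => [->|_] //; ring.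
Qed.

Lemma inMM_vscale l y : inMM y -> inMM (vscale l y).
Proof.
move=> y_MM; rewrite /inMM (@eq_minf _ _ (fun j => l%:Z * y.1 j)).
  by rewrite minfMl // (eqP y_MM) mulr0.
by move=> j; rewrite ffunE.
Qed.

Lemma addM_iotaM i (j k : 'I_r) y y' : inMM y -> inMM y' ->
  addM i (iotaM j y) (iotaM k y') =
  iotaM i (vadd (vadd y y') (chart_corr (min_uD y y') i)).
Proof.
move=> y_MM y'_MM; rewrite /addM !piM_iotaM // (@liftM_iotaM i i) ?phi_inv_add //.
by apply: in_chart_vadd; apply: in_chart_phi.
Qed.

Lemma addM_iotaM_phi i y y' : inMM y -> inMM y' ->
  addM i (iotaM i y) (iotaM i y') = liftM i (vadd (phi i y) (phi i y')).
Proof. by move=> y_MM y'_MM; rewrite /addM !piM_iotaM. Qed.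

Lemma scaleM_iotaM i (j : 'I_r) l y : inMM y ->
  scaleM i l (iotaM j y) = iotaM i (vscale l y).
Proof.
move=> y_MM; rewrite /scaleM piM_iotaM // (@liftM_iotaM i i) ?phi_inv_scale //.
by apply: in_chart_vscale; apply: in_chart_phi.
Qed.

Lemma fab_vadd (ab x x' : V d r) : fab ab (vadd x x') = fab ab x + fab ab x'.
Proof.
rewrite /fab /=.
under eq_bigr => j _ do rewrite ffunE mulrDr.
under [X in _ + X]eq_bigr => k _ do rewrite ffunE mulrDr.
by rewrite !big_split /=; ring.
Qed.

Lemma fab_chart_corr (ab : V d r) c i :
  fab ab (chart_corr c i) = c * (ab.2 i - \sum_j ab.1 j).
Proof.
rewrite /fab /=.
under eq_bigr => j _ do rewrite ffunE mulrN mulrC.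
under [X in _ + X]eq_bigr => k _ do rewrite ffunE.
have -> : \sum_k ab.2 k * (if k == i then c else 0) = ab.2 i * c.
  by rewrite (bigD1 i) //= eqxx big1 ?addr0 // => k /negbTE ->; rewrite mulr0.
by rewrite sumrN -mulr_sumr; ring.
Qed.

Lemma fab_vscale (ab x : V d r) l : fab ab (vscale l x) = l%:Z * fab ab x.
Proof.
rewrite /fab mulrDr !mulr_sumr.
by congr (_ + _); apply: eq_bigr => j _; rewrite ffunE mulrCA.
Qed.

End Lattice.

Section Points.

Variables d r : nat.
Hypothesis d_gt0 : (0 < d)%N.
Implicit Types (i : 'I_r) (y : V d r).

Lemma inMM_of_ge0 (u : {ffun 'I_d -> int}) (w : {ffun 'I_r -> int}) j0 :
  (forall j, 0 <= u j) -> u j0 = 0 -> inMM ((u, w) : V d r).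
Proof. by move=> u_ge0 uj0; rewrite /inMM (minf_eq uj0 u_ge0). Qed.

Lemma inMM_w (w : {ffun 'I_r -> int}) : inMM ((ffun0 d, w) : V d r).
Proof. by apply: (@inMM_of_ge0 _ _ (Ordinal d_gt0)) => [j|]; rewrite ffunE. Qed.

Lemma vadd_update_u (u : {ffun 'I_d -> int}) (w : {ffun 'I_r -> int}) k s : u k = 0 ->
  (([ffun j => if j == k then s else u j], w) : V d r) = vadd (u, w) (sing k s, ffun0 r).
Proof.
move=> uk0; congr (_, _); apply/ffunP => j; rewrite !ffunE ?addr0 //.
by case: eqP => [->|]; rewrite ?uk0 ?add0r ?addr0.
Qed.

Lemma vadd_update_w (u : {ffun 'I_d -> int}) (w : {ffun 'I_r -> int}) k s : w k = 0 ->
  ((u, [ffun j => if j == k then s else w j]) : V d r) = vadd (u, w) (ffun0 d, sing k s).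
Proof.
move=> wk0; congr (_, _); apply/ffunP => j; rewrite !ffunE ?addr0 //.
by case: eqP => [->|]; rewrite ?wk0 ?add0r ?addr0.
Qed.

Lemma sing_vscale_u k (n : nat) :
  ((sing k n%:Z, ffun0 r) : V d r) = vscale n (sing k 1, ffun0 r).
Proof.
by congr (_, _); apply/ffunP => j; rewrite !ffunE ?mulr0 //; case: eqP; rewrite ?mulr1 ?mulr0.
Qed.

Lemma sing_vscale_w k (n : nat) :
  ((ffun0 d, sing k n%:Z) : V d r) = vscale n (ffun0 d, sing k 1).
Proof.
by congr (_, _); apply/ffunP => j; rewrite !ffunE ?mulr0 //; case: eqP; rewrite ?mulr1 ?mulr0.
Qed.

Variable p : Melt d r -> int.
Hypothesis p_point : is_point p.

(* The min-plus identity of a point degenerates to additivity when [u + u']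
   vanishes somewhere, since then no chart correction occurs. *)
Lemma point_vadd i y y' : inMM y -> inMM y' -> min_uD y y' = 0 ->
  p (iotaM i (vadd y y')) = p (iotaM i y) + p (iotaM i y').
Proof.
move=> y_MM y'_MM min0; rewrite p_point.1 (@eq_minf _ _ (fun=> p (iotaM i (vadd y y')))).
  by rewrite (minf_const _ i).
have yy'_MM := inMM_vadd_chart_corr d_gt0 i y_MM y'_MM.
move=> j; rewrite min0 vadd_chart_corr0 in yy'_MM.
by rewrite addM_iotaM // min0 vadd_chart_corr0 (iotaM_indep d_gt0 j i).
Qed.

Lemma point_vscale i l y : inMM y -> p (iotaM i (vscale l y)) = l%:Z * p (iotaM i y).
Proof. by move=> y_MM; rewrite -(scaleM_iotaM d_gt0 i i) // p_point.2. Qed.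

Lemma point_zero i : p (iotaM i (ffun0 d, ffun0 r)) = 0.
Proof.
have -> : ((ffun0 d, ffun0 r) : V d r) = vscale 0 (ffun0 d, ffun0 r).
  by congr (_, _); apply/ffunP => j; rewrite !ffunE mul0r.
by rewrite point_vscale ?mul0r ?inMM_w.
Qed.

Lemma min_uD_w (w w' : {ffun 'I_r -> int}) :
  min_uD ((ffun0 d, w) : V d r) (ffun0 d, w') = 0.
Proof. by apply: (@minf_eq _ _ _ (Ordinal d_gt0)) => [|j]; rewrite !ffunE. Qed.

Lemma point_sing_w i k s :
  p (iotaM i (ffun0 d, sing k s)) = s * p (iotaM i (ffun0 d, sing k 1)).
Proof.
have p_nat n : p (iotaM i (ffun0 d, sing k n%:Z)) = n%:Z * p (iotaM i (ffun0 d, sing k 1)).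
  by rewrite sing_vscale_w point_vscale ?inMM_w.
case: s => n; first exact: p_nat.
have := point_vadd i (inMM_w (sing k (Negz n))) (inMM_w (sing k n.+1%:Z)) (min_uD_w _ _).
have -> : vadd ((ffun0 d, sing k (Negz n)) : V d r) (ffun0 d, sing k n.+1%:Z) = (ffun0 d, ffun0 r).
  by congr (_, _); apply/ffunP => j; rewrite !ffunE ?addr0 //; case: eqP; rewrite ?addr0 // NegzE addNr.
by rewrite point_zero p_nat NegzE mulNr => /eqP; rewrite eq_sym addr_eq0 => /eqP.
Qed.

Lemma point_w i (w : {ffun 'I_r -> int}) :
  p (iotaM i (ffun0 d, w)) = \sum_k p (iotaM i (ffun0 d, sing k 1)) * w k.
Proof.
apply: (@ffun_linear_on _ predT (fun w => p (iotaM i (ffun0 d, w)))) => //.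
  exact: point_zero.
move=> {}w k s wk0 _; split => //.
by rewrite vadd_update_w // point_vadd ?inMM_w ?min_uD_w // point_sing_w.
Qed.

Lemma point_u i j0 (u : {ffun 'I_d -> int}) : (forall j, 0 <= u j) -> u j0 = 0 ->
  p (iotaM i (u, ffun0 r)) = \sum_j p (iotaM i (sing j 1, ffun0 r)) * u j.
Proof.
move=> u_ge0 uj0.
pose A := [pred u : {ffun 'I_d -> int} | [forall j, 0 <= u j] && (u j0 == 0)].
suff : u \in A -> p (iotaM i (u, ffun0 r)) = \sum_j p (iotaM i (sing j 1, ffun0 r)) * u j.
  by apply; apply/andP; split; [apply/forallP | apply/eqP].
apply: (@ffun_linear_on _ A (fun u => p (iotaM i (u, ffun0 r)))).
  exact: point_zero.
move=> v k s vk0 /andP[/forallP upd_ge0 /eqP upd_j0].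
have v_ge0 j : 0 <= v j.
  by have := upd_ge0 j; rewrite ffunE; case: eqP => [->|//]; rewrite vk0.
have vj0 : v j0 = 0.
  by move: upd_j0; rewrite ffunE; case: eqP => [->|//]; rewrite vk0.
split; first by apply/andP; split; [apply/forallP | apply/eqP].
have [kj0|kj0] := eqVneq k j0.
  have s0 : s = 0 by move: upd_j0; rewrite ffunE kj0 eqxx.
  by rewrite s0 mul0r addr0; congr (p (iotaM _ (_, _))); apply/ffunP => j;
    rewrite ffunE; case: eqP => [->|].
have s_ge0 : 0 <= s by have := upd_ge0 k; rewrite ffunE eqxx.
have sing_j0 : sing k s j0 = 0 by rewrite ffunE eq_sym (negbTE kj0).
have sing_ge0 j : 0 <= sing k s j by rewrite ffunE; case: eqP.
rewrite vadd_update_u // point_vadd; first last.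
- by apply: (@minf_eq _ _ _ j0) => [|j]; rewrite ?vj0 ?sing_j0 ?addr0 ?addr_ge0.
- exact: inMM_of_ge0 sing_j0.
- exact: inMM_of_ge0 vj0.
case: s s_ge0 {upd_ge0 upd_j0 sing_j0 sing_ge0} => // n _.
by rewrite sing_vscale_u point_vscale //; apply: (@inMM_of_ge0 _ _ j0) => [j|];
  rewrite ffunE; [case: eqP | rewrite eq_sym (negbTE kj0)].
Qed.

Definition point_coords i0 : V d r :=
  ([ffun j => p (iotaM i0 (sing j 1, ffun0 r))], [ffun k => p (iotaM i0 (ffun0 d, sing k 1))]).

Lemma point_fab i0 i y : inMM y -> p (iotaM i y) = fab (point_coords i0) y.
Proof.
case: y => u w y_MM; have [j0 u_j0] := minf_attained u d_gt0.
have uj0 : u j0 = 0 by rewrite -u_j0 (eqP y_MM).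
have u_ge0 := inMM_ge0 y_MM.
have split_uw : ((u, w) : V d r) = vadd (u, ffun0 r) (ffun0 d, w).
  by congr (_, _); apply/ffunP => j; rewrite !ffunE ?addr0 ?add0r.
rewrite (iotaM_indep d_gt0 i i0) // {1}split_uw point_vadd ?inMM_w //; last first.
  by apply: (@minf_eq _ _ _ j0) => [|j]; rewrite !ffunE ?uj0 ?addr0.
rewrite (point_u i0 u_ge0 uj0) point_w /fab.
by congr (_ + _); apply: eq_bigr => j _; rewrite ffunE.
Qed.

End Points.

Section Spectrum.

Variables d r : nat.
Hypotheses (d_gt1 : (1 < d)%N) (r_gt0 : (0 < r)%N).
Let d_gt0 : (0 < d)%N := ltnW d_gt1.
Implicit Types (i : 'I_r) (y ab : V d r) (p : Melt d r -> int).

Definition represents p ab := forall i y, inMM y -> p (iotaM i y) = fab ab y.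

Lemma exists_other (j : 'I_d) : exists j' : 'I_d, j' != j.
Proof.
have [->|j0] := eqVneq j (Ordinal d_gt0); first by exists (Ordinal d_gt1).
by exists (Ordinal d_gt0); rewrite eq_sym.
Qed.

Lemma inMM_sing_u (j : 'I_d) : inMM ((sing j 1, ffun0 r) : V d r).
Proof.
have [j' j'j] := exists_other j.
by apply: (@inMM_of_ge0 _ _ _ _ j') => [k|]; rewrite ffunE; [case: eqP | rewrite (negbTE j'j)].
Qed.

(* Witnessed by [(e_1, 0)] and [(1 - e_1, 0)], for which [min_uD] is [1]. *)
Lemma min_uD_mul_eq0 (t : int) :
  (forall y y', inMM y -> inMM y' -> min_uD y y' * t = 0) -> t = 0.
Proof.
pose j1 := Ordinal d_gt0; pose y' : V d r := ([ffun j => if j == j1 then 0 else 1], ffun0 r).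
have y'_MM : inMM y'.
  by apply: (@inMM_of_ge0 _ _ _ _ j1) => [j|]; rewrite ffunE ?eqxx //; case: eqP.
have min1 : min_uD (sing j1 1, ffun0 r) y' = 1.
  by apply: (@minf_eq _ _ _ j1) => [|j]; rewrite /= !ffunE ?eqxx //; case: eqP.
by move=> /(_ _ _ (inMM_sing_u j1) y'_MM); rewrite min1 mul1r.
Qed.

Lemma addM_represents p ab i (j k : 'I_r) y y' : represents p ab -> inMM y -> inMM y' ->
  p (addM i (iotaM j y) (iotaM k y')) =
  fab ab y + fab ab y' + min_uD y y' * (ab.2 i - \sum_l ab.1 l).
Proof.
move=> p_ab y_MM y'_MM.
by rewrite addM_iotaM // p_ab ?inMM_vadd_chart_corr // !fab_vadd fab_chart_corr.
Qed.

Lemma minf_addM_represents p ab (j k : 'I_r) y y' : represents p ab -> inMM y -> inMM y' ->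
  minf (fun i => p (addM i (iotaM j y) (iotaM k y'))) =
  fab ab y + fab ab y' + min_uD y y' * (minf ab.2 - \sum_l ab.1 l).
Proof.
move=> p_ab y_MM y'_MM; rewrite (@eq_minf _ _ (fun i => min_uD y y' * ab.2 i +
    (fab ab y + fab ab y' - min_uD y y' * \sum_l ab.1 l))).
  by rewrite minfD // minfMl ?min_uD_ge0 //; ring.
by move=> i; rewrite (addM_represents _ _ _ p_ab) //; ring.
Qed.

Lemma is_point_represents p ab : represents p ab -> is_point p <-> inT ab.
Proof.
pose i0 := Ordinal r_gt0; move=> p_ab; split=> [[p_add _]|/eqP T_ab].
  apply/eqP/esym/subr0_eq/min_uD_mul_eq0 => y y' y_MM y'_MM.
  have := p_add (iotaM i0 y) (iotaM i0 y').
  rewrite (minf_addM_represents _ _ p_ab) // !p_ab // => e.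
  by apply: (addrI (fab ab y + fab ab y')); rewrite addr0 -e.
split=> [m m'|i l m].
  have [y y_MM <-] := iotaM_surj d_gt0 i0 m; have [y' y'_MM <-] := iotaM_surj d_gt0 i0 m'.
  by rewrite (minf_addM_represents _ _ p_ab) // T_ab subrr mulr0 addr0 !p_ab.
have [y y_MM <-] := iotaM_surj d_gt0 i0 m.
by rewrite scaleM_iotaM // !p_ab ?inMM_vscale // fab_vscale.
Qed.

Lemma is_point_at_represents i p ab : represents p ab -> inT ab ->
  is_point_at i p <-> inTi i ab.
Proof.
move=> p_ab T_ab; split=> [[_ p_lin]|/andP[_ /eqP ab_i]].
  rewrite /inTi T_ab; apply/eqP/esym/subr0_eq/min_uD_mul_eq0 => y y' y_MM y'_MM.
  have := p_lin _ _ (in_chart_phi i y) (in_chart_phi i y').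
  rewrite -addM_iotaM_phi // (addM_represents _ _ _ p_ab) // -!/(iotaM i _) !p_ab // => e.
  by apply: (addrI (fab ab y + fab ab y')); rewrite addr0 e.
split; first by apply/(is_point_represents p_ab).
move=> x x' x_chart x'_chart; rewrite -(phi_invK x_chart) -(phi_invK x'_chart).
rewrite -addM_iotaM_phi ?inMM_phi_inv // (addM_represents _ _ _ p_ab) ?inMM_phi_inv //.
by rewrite ab_i subrr mulr0 addr0 -!/(iotaM i _) !p_ab ?inMM_phi_inv.
Qed.

Lemma point_represented p : is_point p -> exists2 ab, inT ab & represents p ab.
Proof.
pose i0 := Ordinal r_gt0; move=> p_point.
have p_ab : represents p (point_coords p i0) by move=> i y; apply: point_fab.
by exists (point_coords p i0) => //; apply/(is_point_represents p_ab).
Qed.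

Lemma fab_inj ab ab' : (forall y, inMM y -> fab ab y = fab ab' y) -> ab = ab'.
Proof.
have fab_u (c : V d r) j : fab c (sing j 1, ffun0 r) = c.1 j.
  by rewrite /fab sum_mul_sing mulr1 big1 ?addr0 // => k _; rewrite ffunE mulr0.
have fab_w (c : V d r) k : fab c (ffun0 d, sing k 1) = c.2 k.
  by rewrite /fab sum_mul_sing mulr1 big1 ?add0r // => j _; rewrite ffunE mulr0.
case: ab ab' => a b [a' b'] ab_ab'.
congr (_, _); apply/ffunP => j.
  by have := ab_ab' _ (inMM_sing_u j); rewrite !fab_u.
by have := ab_ab' _ (inMM_w d_gt0 (sing j 1)); rewrite !fab_w.
Qed.

Lemma point_full p : is_point p -> exists i, is_point_at i p.
Proof.
move=> /point_represented [ab T_ab p_ab]; have [i ab_i] := minf_attained ab.2 r_gt0.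
exists i; apply/(is_point_at_represents i p_ab T_ab).
by rewrite /inTi T_ab (eqP T_ab) ab_i eqxx.
Qed.

End Spectrum.

Theorem mainTheorem16 (d r : nat) (hd : (2 <= d)%N) (hr : (2 <= r)%N) :
  (forall i : 'I_r,
     (forall y : V d r, inMM y -> in_chart i (phi i y)) /\
     {in [pred y : V d r | inMM y] &, injective (phi i)} /\
     (forall x : V d r, in_chart i x -> exists2 y, inMM y & phi i y = x)) /\
  (forall (i j : 'I_r), (j = i.+1 :> nat) ->
     forall y : V d r, inMM y -> mu_adj i (phi i y) = phi j y) /\
  (forall (i j : 'I_r) (y : V d r), inMM y ->
     iotaM i y = iotaM j y /\ piM j (iotaM i y) = phi j y) /\
  (forall i : 'I_r,
     {in [pred y : V d r | inMM y] &, injective (iotaM i)} /\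
     (forall m : Melt d r, exists2 y, inMM y & iotaM i y = m)) /\
  (forall p : Melt d r -> int,
     is_point p <->
     exists2 ab : V d r, inT ab &
       forall (i : 'I_r) (y : V d r), inMM y -> p (iotaM i y) = fab ab y) /\
  (forall ab ab' : V d r, inT ab -> inT ab' ->
     (forall y : V d r, inMM y -> fab ab y = fab ab' y) -> ab = ab') /\
  (forall (i : 'I_r) (p : Melt d r -> int) (ab : V d r), inT ab ->
     (forall (j : 'I_r) (y : V d r), inMM y -> p (iotaM j y) = fab ab y) ->
     (is_point_at i p <-> inTi i ab)) /\
  (forall p : Melt d r -> int, is_point p -> exists i : 'I_r, is_point_at i p).
Proof.
have d_gt0 : (0 < d)%N by apply: ltnW.
have r_gt0 : (0 < r)%N by apply: ltnW.
split.
  move=> i; split; first by move=> y _; apply: in_chart_phi.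
  split=> [y y' y_MM y'_MM e|x x_chart].
    by rewrite -(phiK d_gt0 i y_MM) -(phiK d_gt0 i y'_MM) e.
  by exists (phi_inv i x); [apply: inMM_phi_inv | apply: phi_invK].
split; first by move=> i j ji y; apply: mu_adj_phi.
split; first by move=> i j y y_MM; split; [apply: iotaM_indep | apply: piM_iotaM].
split; first by move=> i; split=> [y y'|m]; [apply: iotaM_inj | apply: iotaM_surj].
split.
  move=> p; split; first exact: point_represented.
  by case=> ab T_ab p_ab; apply/(is_point_represents hd r_gt0 p_ab).
split; first by move=> ab ab' _ _; apply: fab_inj.
split; first by move=> i p ab T_ab p_ab; apply: is_point_at_represents.
exact: point_full.
Qed.
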